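(* Under the standing setup (in either Scenario I or Scenario II), assume $0<h<\frac{1}{d_{\max}}$ and that the expected graph is strongly connected. Then the system $x(t_{k+1})=(I-hL_{\sigma_k})^{\bar k}x(t_k)$ reaches consensus in probability: for every $x(0)\in\mathbb{R}^n$ and every $\varepsilon>0$, $\lim_{k\to\infty}P\{M(t_k)-m(t_k)\ge\varepsilon\}=0$, where $M(t_k)=\max_i x_i(t_k)$ and $m(t_k)=\min_i x_i(t_k)$. The same conclusion holds for the limiting system $x(t_{k+1})=e^{-L_{\sigma_k}\Delta}x(t_k)$.
   Context: Standing setup. $n\ge3$ agents. $G$ is an undirected connected graph on $\{1,\dots,n\}$ with symmetric $0/1$ adjacency matrix $A=[a_{ij}]$ (zero diagonal), degrees $d_i=\sum_j a_{ij}$, $d_{\max}=\max_i d_i$, and Laplacian $L=\mathrm{diag}(d_1,\dots,d_n)-A$, with entries $l_{ij}$. For a (possibly directed) $0/1$ adjacency matrix $B$ ($b_{ij}=1$ meaning agent $i$ receives from agent $j$), its Laplacian is $\mathrm{diag}(B\mathbf{1})-B$. Scenario I (agents 1,2 may fail to receive): $A_1$ is $A$ with row 1 set to zero, $A_2$ is $A$ with row 2 set to zero, $A_3$ is $A$ with rows 1 and 2 set to zero, $A_4=A$. Scenario II (agents 1,2 may fail to send): same with columns instead of rows. $L_i$ is the Laplacian of $A_i$ (so $L_4=L$). Probabilities $p_1=\alpha,p_2=\beta,p_3=\gamma,p_4=\theta\in(0,1)$ with $\alpha+\beta+\gamma+\theta=1$. The expected graph is the directed graph with weighted adjacency matrix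 $\sum_{i=1}^4 p_iA_i$. Sampling period $h>0$, integer $\bar k\ge1$, $\Delta=\bar k h$, $t_k=k\Delta$. $\sigma_0,\sigma_1,\dots$ are i.i.d. random variables in $\{1,2,3,4\}$ with $P(\sigma_k=i)=p_i$ (the graph is held fixed on each interval of length $\Delta$, during which the delta-operator system $\delta x=-L_{\sigma_k}x$ with step $h$ is run $\bar k$ times). The initial state $x(t_0)=x(0)\in\mathbb{R}^n$ is deterministic. $\mathbf{1}$ is the all-ones column vector. *)

From Stdlib Require Import Reals Lra Lia List.
Import ListNotations.
Open Scope R_scope.

(* Agents are indexed 0..n-1 (paper's agent i is index i-1);
   the possibly failing agents "1" and "2" are indices 0 and 1. *)

Definition Mat := nat -> nat -> R.
Definition Vec := nat -> R.

Fixpoint rsum (n : nat) (f : nat -> R) : R :=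
  match n with O => 0 | S m => rsum m f + f m end.

Definition deg (n : nat) (A : Mat) (i : nat) : R := rsum n (fun j => A i j).
Definition vmax (n : nat) (x : Vec) : R := fold_right Rmax (x O) (map x (seq 0 n)).
Definition vmin (n : nat) (x : Vec) : R := fold_right Rmin (x O) (map x (seq 0 n)).
Definition dmax (n : nat) (A : Mat) : R := vmax n (deg n A).

Definition lap (n : nat) (B : Mat) : Mat :=
  fun i j => (if Nat.eqb i j then rsum n (fun k => B i k) else 0) - B i j.

(* directed reachability in the weighted graph W (edge u -> v when W v u > 0 or
   W u v > 0 depending on convention; strong connectivity over all ordered pairs
   is insensitive to this choice) *)
Inductive reach (n : nat) (W : Mat) (i : nat) : nat -> Prop :=
  | reach_refl : reach n W i i
  | reach_step : forall k j, reach n W i k -> (j < n)%nat -> 0 < W k j -> reach n W i j.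

Definition strongly_connected (n : nat) (W : Mat) : Prop :=
  forall i j, (i < n)%nat -> (j < n)%nat -> reach n W i j.

Definition simple_connected_graph (n : nat) (A : Mat) : Prop :=
  (forall i j, (i < n)%nat -> (j < n)%nat -> A i j = 0 \/ A i j = 1) /\
  (forall i j, (i < n)%nat -> (j < n)%nat -> A i j = A j i) /\
  (forall i, (i < n)%nat -> A i i = 0) /\
  strongly_connected n A.

Inductive scenario := ScenarioI | ScenarioII.
Inductive mode := m1 | m2 | m3 | m4.

(* A_s : Scenario I zeroes rows (failure to receive), Scenario II columns *)
Definition Amode (sc : scenario) (A : Mat) (s : mode) : Mat :=
  fun i j =>
    let r := match sc with ScenarioI => i | ScenarioII => j end in
    match s with
    | m1 => if Nat.eqb r 0 then 0 else A i j
    | m2 => if Nat.eqb r 1 then 0 else A i j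
    | m3 => if orb (Nat.eqb r 0) (Nat.eqb r 1) then 0 else A i j
    | m4 => A i j
    end.

Definition Lmode (n : nat) (sc : scenario) (A : Mat) (s : mode) : Mat :=
  lap n (Amode sc A s).

Definition prob (al be ga th : R) (s : mode) : R :=
  match s with m1 => al | m2 => be | m3 => ga | m4 => th end.

Definition expected_graph (sc : scenario) (A : Mat) (al be ga th : R) : Mat :=
  fun i j => al * Amode sc A m1 i j + be * Amode sc A m2 i j
           + ga * Amode sc A m3 i j + th * Amode sc A m4 i j.

Definition matvec (n : nat) (M : Mat) (x : Vec) : Vec :=
  fun i => rsum n (fun j => M i j * x j).
Definition mmul (n : nat) (M N : Mat) : Mat :=
  fun i j => rsum n (fun k => M i k * N k j).
Definition idm : Mat := fun i j => if Nat.eqb i j then 1 else 0.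
Fixpoint mpow (n : nat) (M : Mat) (k : nat) : Mat :=
  match k with O => idm | S k' => mmul n M (mpow n M k') end.
Definition mscale (c : R) (M : Mat) : Mat := fun i j => c * M i j.

Definition is_expm (n : nat) (M E : Mat) : Prop :=
  forall i j, (i < n)%nat -> (j < n)%nat ->
    Un_cv (fun N => rsum (S N) (fun k => mpow n M k i j / INR (Factorial.fact k))) (E i j).

Definition euler_step (n : nat) (h : R) (L : Mat) (x : Vec) : Vec :=
  fun i => x i - h * matvec n L x i.
Definition euler_block (n : nat) (h : R) (kbar : nat) (L : Mat) (x : Vec) : Vec :=
  Nat.iter kbar (euler_step n h L) x.

Definition traj (F : mode -> Vec -> Vec) (x0 : Vec) (w : list mode) : Vec :=
  fold_left (fun x s => F s x) w x0.

Fixpoint words (k : nat) : list (list mode) :=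
  match k with
  | O => [ [] ]
  | S k' => flat_map (fun w => map (fun s => w ++ [s]) [m1; m2; m3; m4]) (words k')
  end.

Definition word_prob (p : mode -> R) (w : list mode) : R :=
  fold_right Rmult 1 (map p w).

(* P{ M(t_k) - m(t_k) >= eps } for i.i.d. sigma_k with P(sigma_k = s) = p s;
   the event depends only on sigma_0..sigma_{k-1}, so this finite sum is its
   probability under the product measure. *)
Definition prob_spread_ge (n : nat) (p : mode -> R) (F : mode -> Vec -> Vec)
    (x0 : Vec) (eps : R) (k : nat) : R :=
  fold_right Rplus 0
    (map (fun w => word_prob p w *
                   (if Rle_dec eps (vmax n (traj F x0 w) - vmin n (traj F x0 w))
                    then 1 else 0))
         (words k)).

(* Every mode acts through a row-stochastic matrix, (I - h L_s)^kbar or exp (- Delta L_s),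
   so no mode increases the spread max_i x_i - min_i x_i.  Mode 4 is the connected graph
   itself and has probability theta > 0.  If every agent is within distance T of agent 0,
   a run of T steps of mode 4 (a single step for the exponential) gives every agent a
   weight at least w > 0 on the value of agent 0, which shrinks the spread by the factor
   1 - w.  Hence the expected spread decays geometrically, and Markov's inequality turns
   this into consensus in probability. *)

From Stdlib Require Import Reals Lra Lia List.
From Coquelicot Require Series.
Import ListNotations.
Open Scope R_scope.

Lemma rsum_ext n f g : (forall k, (k < n)%nat -> f k = g k) -> rsum n f = rsum n g.
Proof.
  induction n as [|n IH]; intros H; simpl; [reflexivity|].
  rewrite IH by (intros; apply H; lia). rewrite H by lia. reflexivity.
Qed.

Lemma rsum_le n f g : (forall k, (k < n)%nat -> f k <= g k) -> rsum n f <= rsum n g.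
Proof.
  induction n as [|n IH]; intros H; simpl; [lra|].
  apply Rplus_le_compat; [apply IH; intros; apply H|apply H]; lia.
Qed.

Lemma rsum_plus n f g : rsum n (fun k => f k + g k) = rsum n f + rsum n g.
Proof. induction n as [|n IH]; simpl; [lra|]. rewrite IH; ring. Qed.

Lemma rsum_minus n f g : rsum n (fun k => f k - g k) = rsum n f - rsum n g.
Proof. induction n as [|n IH]; simpl; [lra|]. rewrite IH; ring. Qed.

Lemma rsum_scal n c f : rsum n (fun k => c * f k) = c * rsum n f.
Proof. induction n as [|n IH]; simpl; [lra|]. rewrite IH; ring. Qed.

Lemma rsum_const n c : rsum n (fun _ => c) = INR n * c.
Proof. induction n as [|n IH]; simpl rsum; [simpl; lra|]. rewrite IH, S_INR; ring. Qed.

Lemma rsum_nonneg n f : (forall k, (k < n)%nat -> 0 <= f k) -> 0 <= rsum n f.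
Proof.
  intros H. rewrite <- (Rmult_0_r (INR n)), <- rsum_const. apply rsum_le; auto.
Qed.

Lemma rsum_ge_term n f j :
  (forall k, (k < n)%nat -> 0 <= f k) -> (j < n)%nat -> f j <= rsum n f.
Proof.
  induction n as [|n IH]; intros H Hj; simpl; [lia|].
  assert (0 <= f n) by (apply H; lia).
  destruct (Nat.eq_dec j n) as [->|Hjn].
  - assert (0 <= rsum n f) by (apply rsum_nonneg; intros; apply H; lia). lra.
  - assert (f j <= rsum n f) by (apply IH; [intros; apply H|]; lia). lra.
Qed.

Lemma rsum_idm_l n i (g : nat -> R) : (i < n)%nat -> rsum n (fun l => idm i l * g l) = g i.
Proof.
  intros Hi. induction n as [|n IH]; [lia|]. simpl. unfold idm at 2.
  destruct (Nat.eq_dec i n) as [->|Hin].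
  - rewrite Nat.eqb_refl, (rsum_ext n _ (fun _ => 0)), rsum_const; [ring|].
    intros k Hk. unfold idm. destruct (Nat.eqb_spec n k); [lia|ring].
  - rewrite IH by lia. destruct (Nat.eqb_spec i n); [lia|ring].
Qed.

Lemma rsum_swap n m (f : nat -> nat -> R) :
  rsum n (fun i => rsum m (fun j => f i j)) = rsum m (fun j => rsum n (fun i => f i j)).
Proof.
  induction n as [|n IH]; simpl.
  - rewrite rsum_const; ring.
  - rewrite IH, <- rsum_plus. reflexivity.
Qed.

Lemma rsum_sum_f_R0 n N (f : nat -> nat -> R) :
  rsum n (fun l => sum_f_R0 (f l) N) = sum_f_R0 (fun k => rsum n (fun l => f l k)) N.
Proof. induction N as [|N IH]; simpl; [reflexivity|]. rewrite rsum_plus, IH. reflexivity. Qed.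

Lemma rsum_S_sum_f_R0 N f : rsum (S N) f = sum_f_R0 f N.
Proof. induction N as [|N IH]; simpl in *; [ring|]. rewrite <- IH. reflexivity. Qed.

Lemma Un_cv_rsum n (u : nat -> nat -> R) (l : nat -> R) :
  (forall j, (j < n)%nat -> Un_cv (u j) (l j)) ->
  Un_cv (fun N => rsum n (fun j => u j N)) (rsum n l).
Proof.
  induction n as [|n IH]; simpl; intros H.
  - intros e He. exists O. intros. unfold Rdist. rewrite Rminus_diag, Rabs_R0. lra.
  - apply CV_plus; [apply IH; intros|]; apply H; lia.
Qed.

Lemma fold_Rmax_ge (x : Vec) z l :
  z <= fold_right Rmax z (map x l) /\ forall i, In i l -> x i <= fold_right Rmax z (map x l).
Proof.
  induction l as [|a l [IHz IHl]]; simpl; [split; [lra|tauto]|].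
  split; [eapply Rle_trans; [apply IHz|apply Rmax_r]|].
  intros i [<-|Hi]; [apply Rmax_l|]. eapply Rle_trans; [apply IHl; auto|apply Rmax_r].
Qed.

Lemma fold_Rmax_le (x : Vec) z l c :
  z <= c -> (forall i, In i l -> x i <= c) -> fold_right Rmax z (map x l) <= c.
Proof.
  induction l as [|a l IH]; simpl; intros Hz H; [exact Hz|].
  apply Rmax_lub; auto.
Qed.

Lemma fold_Rmin_le (x : Vec) z l :
  fold_right Rmin z (map x l) <= z /\ forall i, In i l -> fold_right Rmin z (map x l) <= x i.
Proof.
  induction l as [|a l [IHz IHl]]; simpl; [split; [lra|tauto]|].
  split; [eapply Rle_trans; [apply Rmin_r|apply IHz]|].
  intros i [<-|Hi]; [apply Rmin_l|]. eapply Rle_trans; [apply Rmin_r|apply IHl; auto].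
Qed.

Lemma fold_Rmin_ge (x : Vec) z l c :
  c <= z -> (forall i, In i l -> c <= x i) -> c <= fold_right Rmin z (map x l).
Proof.
  induction l as [|a l IH]; simpl; intros Hz H; [exact Hz|].
  apply Rmin_glb; auto.
Qed.

Lemma vmax_ge n x i : (i < n)%nat -> x i <= vmax n x.
Proof. intros Hi. apply fold_Rmax_ge, in_seq. lia. Qed.

Lemma vmax_le n x c : (0 < n)%nat -> (forall i, (i < n)%nat -> x i <= c) -> vmax n x <= c.
Proof. intros Hn H. apply fold_Rmax_le; [auto|]. intros i Hi. apply in_seq in Hi. apply H; lia. Qed.

Lemma vmin_le n x i : (i < n)%nat -> vmin n x <= x i.
Proof. intros Hi. apply fold_Rmin_le, in_seq. lia. Qed.

Lemma vmin_ge n x c : (0 < n)%nat -> (forall i, (i < n)%nat -> c <= x i) -> c <= vmin n x.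
Proof. intros Hn H. apply fold_Rmin_ge; [auto|]. intros i Hi. apply in_seq in Hi. apply H; lia. Qed.

Definition spread n (x : Vec) : R := vmax n x - vmin n x.

Lemma spread_nonneg n x : (0 < n)%nat -> 0 <= spread n x.
Proof. intros Hn. pose proof (vmax_ge n x O Hn). pose proof (vmin_le n x O Hn). unfold spread. lra. Qed.

Lemma spread_le_of_bounds n y a b :
  (0 < n)%nat -> (forall i, (i < n)%nat -> a <= y i <= b) -> spread n y <= b - a.
Proof.
  intros Hn H. unfold spread.
  assert (vmax n y <= b) by (apply vmax_le; [|intros i Hi; apply H]; auto).
  assert (a <= vmin n y) by (apply vmin_ge; [|intros i Hi; apply H]; auto).
  lra.
Qed.

Lemma iter_iter {X} (f : X -> X) k D x : Nat.iter D (Nat.iter k f) x = Nat.iter (D * k) f x.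
Proof. induction D as [|D IH]; simpl; [reflexivity|]. rewrite IH, <- Nat.iter_add. reflexivity. Qed.

Lemma spread_iter_le n (F : Vec -> Vec) :
  (forall x, spread n (F x) <= spread n x) ->
  forall k x, spread n (Nat.iter k F x) <= spread n x.
Proof.
  intros HF k x. induction k as [|k IH]; simpl; [lra|].
  eapply Rle_trans; [apply HF|exact IH].
Qed.

(** * Row-stochastic matrices *)

Definition row_stochastic n (W : Mat) : Prop :=
  (forall i j, (i < n)%nat -> (j < n)%nat -> 0 <= W i j) /\
  (forall i, (i < n)%nat -> rsum n (W i) = 1).

Section RowStochastic.
Variables (n : nat) (W : Mat).
Hypothesis W_stoch : row_stochastic n W.

Lemma matvec_le_sub x M i k : (i < n)%nat -> (k < n)%nat ->
  (forall j, (j < n)%nat -> x j <= M) -> matvec n W x i <= M - W i k * (M - x k).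
Proof.
  intros Hi Hk Hx. destruct W_stoch as [Wpos Wsum].
  assert (Hdev : matvec n W x i = M - rsum n (fun j => W i j * (M - x j))).
  { unfold matvec. rewrite <- (Rmult_1_r M) at 1. rewrite <- (Wsum i Hi).
    rewrite <- rsum_scal, <- rsum_minus. apply rsum_ext. intros. ring. }
  assert (W i k * (M - x k) <= rsum n (fun j => W i j * (M - x j))).
  { apply (rsum_ge_term n (fun j => W i j * (M - x j))); auto.
    intros j Hj. apply Rmult_le_pos; [auto|]. specialize (Hx j Hj). lra. }
  lra.
Qed.

Lemma matvec_ge_add x m i k : (i < n)%nat -> (k < n)%nat ->
  (forall j, (j < n)%nat -> m <= x j) -> m + W i k * (x k - m) <= matvec n W x i.
Proof.
  intros Hi Hk Hx.
  assert (H := matvec_le_sub (fun j => - x j) (- m) i k Hi Hk).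
  assert (Hneg : matvec n W (fun j => - x j) i = - matvec n W x i).
  { unfold matvec. rewrite <- (Rmult_1_l (rsum n (fun j => W i j * x j))).
    rewrite Ropp_mult_distr_l, <- rsum_scal. apply rsum_ext. intros. ring. }
  rewrite Hneg in H. enough (- matvec n W x i <= - m - W i k * (- m - - x k)) by lra.
  apply H. intros j Hj. specialize (Hx j Hj). lra.
Qed.

Lemma matvec_bounds x a b i : (i < n)%nat ->
  (forall j, (j < n)%nat -> a <= x j <= b) -> a <= matvec n W x i <= b.
Proof.
  intros Hi Hx. destruct W_stoch as [Wpos _].
  assert (0 <= W i i * (x i - a) /\ 0 <= W i i * (b - x i)) as [Ha Hb].
  { specialize (Hx i Hi). split; apply Rmult_le_pos; auto; lra. }
  pose proof (matvec_ge_add x a i i Hi Hi (fun j Hj => proj1 (Hx j Hj))).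
  pose proof (matvec_le_sub x b i i Hi Hi (fun j Hj => proj2 (Hx j Hj))).
  lra.
Qed.

Lemma spread_avg_le (F : Vec -> Vec) x : (0 < n)%nat ->
  (forall i, (i < n)%nat -> F x i = matvec n W x i) -> spread n (F x) <= spread n x.
Proof.
  intros Hn HF. apply spread_le_of_bounds; [exact Hn|]. intros i Hi.
  rewrite HF by exact Hi. apply matvec_bounds; [exact Hi|].
  intros j Hj. split; [apply vmin_le|apply vmax_ge]; exact Hj.
Qed.

Lemma spread_matvec_contract x k d : (0 < n)%nat -> (k < n)%nat ->
  (forall i, (i < n)%nat -> d <= W i k) -> 0 <= d ->
  spread n (matvec n W x) <= (1 - d) * spread n x.
Proof.
  intros Hn Hk Hd Hd0. unfold spread at 2.
  pose proof (vmax_ge n x k Hk). pose proof (vmin_le n x k Hk).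
  replace ((1 - d) * (vmax n x - vmin n x))
    with ((vmax n x - d * (vmax n x - x k)) - (vmin n x + d * (x k - vmin n x))) by ring.
  apply spread_le_of_bounds; [exact Hn|]. intros i Hi. split.
  - eapply Rle_trans; [|apply (matvec_ge_add x (vmin n x) i k Hi Hk); intros j Hj; apply vmin_le; exact Hj].
    apply Rplus_le_compat_l, Rmult_le_compat_r; [lra|auto].
  - eapply Rle_trans; [apply (matvec_le_sub x (vmax n x) i k Hi Hk); intros j Hj; apply vmax_ge; exact Hj|].
    apply Rplus_le_compat_l, Ropp_le_contravar, Rmult_le_compat_r; [lra|auto].
Qed.

End RowStochastic.

(** * Expectations over the random mode sequence *)

Lemma sum_list_le {X} (f g : X -> R) l :
  (forall w, f w <= g w) -> fold_right Rplus 0 (map f l) <= fold_right Rplus 0 (map g l).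
Proof. intros H. induction l as [|a l IH]; simpl; [lra|]. pose proof (H a). lra. Qed.

Lemma sum_list_nonneg {X} (f : X -> R) l :
  (forall w, 0 <= f w) -> 0 <= fold_right Rplus 0 (map f l).
Proof. intros H. induction l as [|a l IH]; simpl; [lra|]. pose proof (H a). lra. Qed.

Lemma sum_list_scal {X} (f : X -> R) c l :
  fold_right Rplus 0 (map (fun w => c * f w) l) = c * fold_right Rplus 0 (map f l).
Proof. induction l as [|a l IH]; simpl; [ring|]. rewrite IH. ring. Qed.

Lemma sum_list_flat_map {X Y} (g : Y -> R) (h : X -> list Y) l :
  fold_right Rplus 0 (map g (flat_map h l)) =
  fold_right Rplus 0 (map (fun w => fold_right Rplus 0 (map g (h w))) l).
Proof.
  induction l as [|a l IH]; simpl; [reflexivity|].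
  rewrite map_app, fold_right_app, <- IH.
  generalize (fold_right Rplus 0 (map g (flat_map h l))).
  induction (h a) as [|b t IHt]; simpl; intros r; [ring|]. rewrite IHt. ring.
Qed.

Lemma word_prob_snoc p w s : word_prob p (w ++ [s]) = word_prob p w * p s.
Proof.
  unfold word_prob. rewrite map_app, fold_right_app. simpl.
  induction (map p w) as [|a l IH]; simpl; [ring|]. rewrite IH. ring.
Qed.

Lemma word_prob_nonneg p w : (forall s, 0 <= p s) -> 0 <= word_prob p w.
Proof.
  intros Hp. unfold word_prob. induction w as [|s w IH]; simpl; [lra|].
  apply Rmult_le_pos; auto.
Qed.

Lemma traj_snoc F x0 w s : traj F x0 (w ++ [s]) = F s (traj F x0 w).
Proof. unfold traj. rewrite fold_left_app. reflexivity. Qed.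

Lemma Un_cv_0_of_geometric (u : nat -> R) D rho C : 0 <= rho < 1 -> 0 <= C ->
  (forall m k, (m * D <= k)%nat -> 0 <= u k <= rho ^ m * C) -> Un_cv u 0.
Proof.
  intros Hrho HC Hu e He.
  destruct (pow_lt_1_zero rho ltac:(rewrite Rabs_pos_eq; lra) (e / (C + 1))) as [m Hm].
  { apply Rdiv_lt_0_compat; lra. }
  exists (m * D)%nat. intros k Hk. destruct (Hu m k Hk) as [H0 H1].
  specialize (Hm m (le_n m)). rewrite Rabs_pos_eq in Hm by (apply pow_le; lra).
  unfold Rdist. rewrite Rminus_0_r, Rabs_pos_eq by exact H0.
  apply (Rmult_lt_compat_r (C + 1)) in Hm; [|lra].
  unfold Rdiv in Hm. rewrite Rmult_assoc, Rinv_l, Rmult_1_r in Hm by lra.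
  assert (0 <= rho ^ m) by (apply pow_le; lra). nra.
Qed.

Section Expectation.
Variables (n : nat) (p : mode -> R) (F : mode -> Vec -> Vec).

Definition expect (k : nat) (f : Vec -> R) (x0 : Vec) : R :=
  fold_right Rplus 0 (map (fun w => word_prob p w * f (traj F x0 w)) (words k)).

Definition step_expect (f : Vec -> R) (x : Vec) : R :=
  p m1 * f (F m1 x) + p m2 * f (F m2 x) + p m3 * f (F m3 x) + p m4 * f (F m4 x).

Lemma expect_0 f x0 : expect 0 f x0 = f x0.
Proof. unfold expect, word_prob, traj. simpl. ring. Qed.

Lemma expect_S_last k f x0 : expect (S k) f x0 = expect k (step_expect f) x0.
Proof.
  unfold expect. simpl words. rewrite sum_list_flat_map. f_equal. apply map_ext. intros w.
  simpl. rewrite !word_prob_snoc, !traj_snoc. unfold step_expect. ring.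
Qed.

Lemma expect_scal k f c x0 : expect k (fun y => c * f y) x0 = c * expect k f x0.
Proof.
  unfold expect. rewrite <- sum_list_scal. f_equal. apply map_ext. intros. ring.
Qed.

Hypothesis p_nonneg : forall s, 0 <= p s.
Hypothesis p_sum : p m1 + p m2 + p m3 + p m4 = 1.

Lemma step_expect_mono f g : (forall x, f x <= g x) -> forall x, step_expect f x <= step_expect g x.
Proof.
  intros H x. unfold step_expect.
  repeat apply Rplus_le_compat; apply Rmult_le_compat_l; auto.
Qed.

Lemma expect_mono k : forall f g, (forall x, f x <= g x) -> forall x0, expect k f x0 <= expect k g x0.
Proof.
  induction k as [|k IH]; intros f g H x0.
  - rewrite !expect_0. apply H.
  - rewrite !expect_S_last. apply IH, step_expect_mono, H.
Qed.

Lemma expect_S k f x : expect (S k) f x = step_expect (expect k f) x.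
Proof.
  revert f x. induction k as [|k IH]; intros f x.
  - rewrite expect_S_last, expect_0. unfold step_expect. rewrite !expect_0. reflexivity.
  - rewrite expect_S_last, IH. unfold step_expect. rewrite !expect_S_last. reflexivity.
Qed.

Lemma expect_add k j f x : expect (k + j) f x = expect k (expect j f) x.
Proof.
  revert x. induction k as [|k IH]; intros x; simpl plus.
  - rewrite expect_0. reflexivity.
  - rewrite !expect_S. unfold step_expect. rewrite !IH. reflexivity.
Qed.

Lemma step_expect_split f x s0 a : (forall s, f (F s x) <= a) ->
  step_expect f x <= (1 - p s0) * a + p s0 * f (F s0 x).
Proof.
  intros Ha. unfold step_expect.
  assert (forall s, p s * f (F s x) <= p s * a) as Hs
    by (intros s; apply Rmult_le_compat_l; auto).
  pose proof (Hs m1). pose proof (Hs m2). pose proof (Hs m3). pose proof (Hs m4).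
  destruct s0; nra.
Qed.

Hypothesis n_pos : (0 < n)%nat.
Hypothesis F_nonexpansive : forall s x, spread n (F s x) <= spread n x.

Lemma step_expect_spread_le x : step_expect (spread n) x <= spread n x.
Proof.
  eapply Rle_trans; [apply (step_expect_split _ _ m4 (spread n x))|].
  - intros s. apply F_nonexpansive.
  - pose proof (p_nonneg m4). pose proof (F_nonexpansive m4 x). nra.
Qed.

Lemma expect_spread_antitone j k x : (j <= k)%nat -> expect k (spread n) x <= expect j (spread n) x.
Proof.
  induction 1 as [|k _ IH]; [lra|]. eapply Rle_trans; [|exact IH].
  rewrite expect_S_last. apply expect_mono, step_expect_spread_le.
Qed.

Lemma expect_spread_le k x : expect k (spread n) x <= spread n x.
Proof.
  eapply Rle_trans; [apply (expect_spread_antitone 0)|rewrite expect_0]; lia || lra.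
Qed.

(* with probability [p s0 ^ j] the first [j] modes are all [s0] *)
Lemma expect_spread_iter s0 j x :
  expect j (spread n) x <= (1 - p s0 ^ j) * spread n x + p s0 ^ j * spread n (Nat.iter j (F s0) x).
Proof.
  revert x. induction j as [|j IH]; intros x; [rewrite expect_0; simpl; lra|].
  assert (Hq : 0 <= p s0 <= 1) by (pose proof (p_nonneg m1); pose proof (p_nonneg m2);
    pose proof (p_nonneg m3); pose proof (p_nonneg m4); destruct s0; simpl; lra).
  assert (Hqj : 0 <= p s0 ^ j <= 1)
    by (split; [apply pow_le, Hq|rewrite <- (pow1 j); apply pow_incr, Hq]).
  rewrite expect_S. eapply Rle_trans; [apply (step_expect_split _ _ s0 (spread n x))|].
  - intros s. eapply Rle_trans; [apply expect_spread_le|apply F_nonexpansive].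
  - pose proof (IH (F s0 x)) as HF. rewrite <- Nat.iter_succ_r in HF.
    pose proof (F_nonexpansive s0 x). simpl pow.
    assert (p s0 * ((1 - p s0 ^ j) * spread n (F s0 x)) <= p s0 * ((1 - p s0 ^ j) * spread n x))
      by (apply Rmult_le_compat_l; [|apply Rmult_le_compat_l]; lra).
    nra.
Qed.

Lemma prob_spread_ge_bounds x0 eps k : 0 < eps ->
  0 <= prob_spread_ge n p F x0 eps k <= expect k (spread n) x0 / eps.
Proof.
  intros Heps. unfold prob_spread_ge, expect. split.
  - apply sum_list_nonneg. intros w.
    apply Rmult_le_pos; [apply word_prob_nonneg, p_nonneg|]. destruct Rle_dec; lra.
  - unfold Rdiv. rewrite Rmult_comm, <- sum_list_scal. apply sum_list_le. intros w.
    pose proof (word_prob_nonneg p w p_nonneg). pose proof (Rinv_0_lt_compat eps Heps).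
    pose proof (spread_nonneg n (traj F x0 w) n_pos). unfold spread in *.
    destruct Rle_dec as [Hle|_].
    + rewrite Rmult_1_r, <- (Rmult_1_r (word_prob p w)) at 1.
      replace (/ eps * (word_prob p w * (vmax n (traj F x0 w) - vmin n (traj F x0 w))))
        with (word_prob p w * ((vmax n (traj F x0 w) - vmin n (traj F x0 w)) * / eps)) by ring.
      apply Rmult_le_compat_l; [lra|]. apply (Rmult_le_reg_l eps); [lra|].
      rewrite Rmult_1_r, Rmult_comm, Rmult_assoc, Rinv_l, Rmult_1_r by lra. lra.
    + rewrite Rmult_0_r. apply Rmult_le_pos; [lra|]. apply Rmult_le_pos; lra.
Qed.

Lemma expect_spread_geometric D rho : 0 <= rho ->
  (forall x, expect D (spread n) x <= rho * spread n x) ->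
  forall m x, expect (m * D) (spread n) x <= rho ^ m * spread n x.
Proof.
  intros Hrho HD m. induction m as [|m IH]; intros x; [rewrite expect_0; simpl; lra|].
  rewrite Nat.mul_succ_l, expect_add.
  eapply Rle_trans; [apply expect_mono, HD|]. rewrite expect_scal. simpl pow.
  rewrite Rmult_assoc. apply Rmult_le_compat_l; [exact Hrho|apply IH].
Qed.

Theorem consensus_in_probability s0 D c :
  0 < p s0 -> 0 <= c < 1 ->
  (forall x, spread n (Nat.iter D (F s0) x) <= c * spread n x) ->
  forall x0 eps, 0 < eps -> Un_cv (prob_spread_ge n p F x0 eps) 0.
Proof.
  intros Hs0 Hc HD x0 eps Heps.
  set (q := p s0 ^ D).
  assert (Hq : 0 < q <= 1).
  { split; [apply pow_lt, Hs0|]. unfold q. rewrite <- (pow1 D). apply pow_incr.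
    pose proof (p_nonneg m1); pose proof (p_nonneg m2); pose proof (p_nonneg m3);
      pose proof (p_nonneg m4); destruct s0; simpl; lra. }
  assert (Hstep : forall x, expect D (spread n) x <= (1 - q * (1 - c)) * spread n x).
  { intros x. pose proof (expect_spread_iter s0 D x). pose proof (HD x).
    pose proof (spread_nonneg n x n_pos). fold q in H. nra. }
  apply (Un_cv_0_of_geometric _ D (1 - q * (1 - c)) (spread n x0 / eps)); [nra|..].
  - apply Rmult_le_pos; [apply spread_nonneg, n_pos|left; apply Rinv_0_lt_compat, Heps].
  - intros m k Hk. destruct (prob_spread_ge_bounds x0 eps k Heps) as [H0 H1].
    split; [exact H0|]. eapply Rle_trans; [exact H1|]. unfold Rdiv. rewrite <- Rmult_assoc.
    apply Rmult_le_compat_r; [left; apply Rinv_0_lt_compat, Heps|].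
    eapply Rle_trans; [apply expect_spread_antitone, Hk|].
    apply expect_spread_geometric; [nra|exact Hstep].
Qed.

End Expectation.

Lemma lap_idm n B i j : lap n B i j = idm i j * rsum n (B i) - B i j.
Proof. unfold lap, idm. destruct (Nat.eqb i j); [rewrite Rmult_1_l|rewrite Rmult_0_l]; reflexivity. Qed.

Lemma lap_rowsum n B i : (i < n)%nat -> rsum n (lap n B i) = 0.
Proof.
  intros Hi. rewrite (rsum_ext n _ (fun j => idm i j * rsum n (B i) - B i j))
    by (intros; apply lap_idm).
  rewrite rsum_minus, (rsum_idm_l n i (fun _ => rsum n (B i)) Hi). apply Rminus_diag.
Qed.

Lemma lap_diag n B i : lap n B i i = rsum n (B i) - B i i.
Proof. rewrite lap_idm. unfold idm. rewrite Nat.eqb_refl. ring. Qed.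

Lemma lap_off n B i j : i <> j -> lap n B i j = - B i j.
Proof. intros Hij. rewrite lap_idm. unfold idm. destruct (Nat.eqb_spec i j); [lia|ring]. Qed.

Definition euler_matrix (h : R) (L : Mat) : Mat := fun i j => idm i j - h * L i j.

Lemma euler_step_matvec n h L x i : (i < n)%nat -> euler_step n h L x i = matvec n (euler_matrix h L) x i.
Proof.
  intros Hi. unfold euler_step, matvec, euler_matrix.
  rewrite (rsum_ext n (fun j => (idm i j - h * L i j) * x j)
    (fun j => idm i j * x j - h * (L i j * x j))) by (intros; ring).
  rewrite rsum_minus, rsum_scal, rsum_idm_l by exact Hi. reflexivity.
Qed.

Section EulerMatrix.
Variables (n : nat) (B : Mat) (dm h : R).
Hypothesis B_nonneg : forall i j, (i < n)%nat -> (j < n)%nat -> 0 <= B i j.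
Hypothesis B_diag : forall i, (i < n)%nat -> B i i = 0.
Hypothesis B_deg : forall i, (i < n)%nat -> rsum n (B i) <= dm.
Hypothesis h_pos : 0 < h.
Hypothesis h_dm : h * dm < 1.

Lemma euler_matrix_diag i : (i < n)%nat -> 1 - h * dm <= euler_matrix h (lap n B) i i.
Proof.
  intros Hi. unfold euler_matrix, idm. rewrite Nat.eqb_refl, lap_diag, B_diag by exact Hi.
  pose proof (B_deg i Hi). nra.
Qed.

Lemma euler_matrix_off i j : i <> j -> euler_matrix h (lap n B) i j = h * B i j.
Proof.
  intros Hij. unfold euler_matrix, idm. rewrite lap_off by exact Hij.
  destruct (Nat.eqb_spec i j); [lia|ring].
Qed.

Lemma euler_matrix_stochastic : row_stochastic n (euler_matrix h (lap n B)).
Proof.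
  split.
  - intros i j Hi Hj. destruct (Nat.eq_dec i j) as [<-|Hij].
    + pose proof (euler_matrix_diag i Hi). lra.
    + rewrite euler_matrix_off by exact Hij. apply Rmult_le_pos; [lra|auto].
  - intros i Hi. unfold euler_matrix.
    rewrite (rsum_ext n (fun j => idm i j - h * lap n B i j)
      (fun j => idm i j * 1 - h * lap n B i j)) by (intros; ring).
    rewrite rsum_minus, rsum_scal, lap_rowsum, rsum_idm_l by exact Hi. ring.
Qed.

End EulerMatrix.

(** * Connectivity and iterated averaging *)

(* [within n A t i]: agent [i] is reachable from agent [0] in at most [t] steps,
   an edge [k -> i] meaning that [i] receives from [k]. *)
Inductive within (n : nat) (A : Mat) : nat -> nat -> Prop :=
  | within_root : within n A 0 0
  | within_S t i : within n A t i -> within n A (S t) i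
  | within_edge t i k : within n A t k -> (k < n)%nat -> (i < n)%nat -> 0 < A i k ->
      within n A (S t) i.

Lemma within_lt n A t i : (0 < n)%nat -> within n A t i -> (i < n)%nat.
Proof. intros Hn H. induction H; auto. Qed.

Lemma within_le n A t t' i : (t <= t')%nat -> within n A t i -> within n A t' i.
Proof. intros Hle H. induction Hle; [exact H|]. apply within_S, IHHle. Qed.

Lemma reach_within n A j :
  (forall i k, (i < n)%nat -> (k < n)%nat -> A i k = A k i) ->
  (0 < n)%nat -> reach n A 0 j -> exists t, within n A t j.
Proof.
  intros Hsym Hn H. induction H as [|k j Hr [t Ht] Hj HA].
  - exists O. constructor.
  - exists (S t). apply (within_edge n A t j k Ht); [apply (within_lt n A t); auto|exact Hj|].
    rewrite Hsym; [exact HA|exact Hj|apply (within_lt n A t); auto].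
Qed.

Lemma within_all n A :
  (forall i k, (i < n)%nat -> (k < n)%nat -> A i k = A k i) -> (0 < n)%nat ->
  strongly_connected n A -> exists T, forall i, (i < n)%nat -> within n A T i.
Proof.
  intros Hsym Hn Hc.
  enough (forall m, exists T, forall i, (i < m)%nat -> (i < n)%nat -> within n A T i) as Hm
    by (destruct (Hm n) as [T HT]; exists T; intros i Hi; apply HT; exact Hi).
  induction m as [|m [T HT]]; [exists O; intros; lia|].
  destruct (Compare_dec.le_lt_dec n m) as [Hnm|Hmn].
  - exists T. intros i Hi Hin. apply HT; lia.
  - destruct (reach_within n A m Hsym Hn (Hc O m Hn Hmn)) as [t Ht].
    exists (T + t)%nat. intros i Hi Hin. destruct (Nat.eq_dec i m) as [->|Him].
    + apply (within_le n A t); [lia|exact Ht].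
    + apply (within_le n A T); [lia|apply HT; lia].
Qed.

Section IteratedAveraging.
Variables (n : nat) (A W : Mat) (F : Vec -> Vec) (g : R).
Hypothesis n_pos : (0 < n)%nat.
Hypothesis W_stoch : row_stochastic n W.
Hypothesis F_matvec : forall x i, (i < n)%nat -> F x i = matvec n W x i.
Hypothesis g_nonneg : 0 <= g.
Hypothesis g_diag : forall i, (i < n)%nat -> g <= W i i.
Hypothesis g_edge : forall i k, (i < n)%nat -> (k < n)%nat -> 0 < A i k -> g <= W i k.

Lemma iter_avg_range t x i : (i < n)%nat -> vmin n x <= Nat.iter t F x i <= vmax n x.
Proof.
  revert i. induction t as [|t IH]; intros i Hi; simpl.
  - split; [apply vmin_le|apply vmax_ge]; exact Hi.
  - rewrite F_matvec by exact Hi. apply matvec_bounds; auto.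
Qed.

Lemma avg_step_bounds y a b i k e1 e2 : (i < n)%nat -> (k < n)%nat -> g <= W i k ->
  (forall j, (j < n)%nat -> a <= y j <= b) -> 0 <= e1 -> 0 <= e2 ->
  y k <= b - e1 -> a + e2 <= y k -> F y i <= b - g * e1 /\ a + g * e2 <= F y i.
Proof.
  intros Hi Hk Hg Hy He1 He2 Hup Hlo. rewrite F_matvec by exact Hi.
  pose proof (matvec_le_sub n W W_stoch y b i k Hi Hk (fun j Hj => proj2 (Hy j Hj))).
  pose proof (matvec_ge_add n W W_stoch y a i k Hi Hk (fun j Hj => proj1 (Hy j Hj))).
  assert (g * e1 <= W i k * (b - y k)) by (apply Rmult_le_compat; lra).
  assert (g * e2 <= W i k * (y k - a)) by (apply Rmult_le_compat; lra).
  lra.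
Qed.

(* the weight of agent [0] in the value of an agent within distance [t] is at least [g ^ t] *)
Lemma iter_avg_within t x i : within n A t i ->
  Nat.iter t F x i <= vmax n x - g ^ t * (vmax n x - x O) /\
  vmin n x + g ^ t * (x O - vmin n x) <= Nat.iter t F x i.
Proof.
  pose proof (vmax_ge n x O n_pos). pose proof (vmin_le n x O n_pos).
  assert (Hrange : forall t j, (j < n)%nat -> vmin n x <= Nat.iter t F x j <= vmax n x)
    by (intros; apply iter_avg_range; auto).
  induction 1 as [|t i Hw IH|t i k Hw IH Hk Hi HA]; [simpl; lra| |];
    simpl Nat.iter; simpl pow; rewrite !Rmult_assoc;
    assert (0 <= g ^ t) by (apply pow_le, g_nonneg).
  - assert (Hi : (i < n)%nat) by (apply (within_lt n A t); auto).
    apply (avg_step_bounds _ _ _ i i); auto; first [apply Rmult_le_pos; lra|lra].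
  - apply (avg_step_bounds _ _ _ i k); auto; first [apply Rmult_le_pos; lra|lra].
Qed.

Lemma spread_iter_avg_contract T x : (forall i, (i < n)%nat -> within n A T i) ->
  spread n (Nat.iter T F x) <= (1 - g ^ T) * spread n x.
Proof.
  intros HT. unfold spread at 2.
  replace ((1 - g ^ T) * (vmax n x - vmin n x))
    with ((vmax n x - g ^ T * (vmax n x - x O)) - (vmin n x + g ^ T * (x O - vmin n x))) by ring.
  apply spread_le_of_bounds; [exact n_pos|]. intros i Hi.
  destruct (iter_avg_within T x i (HT i Hi)). split; assumption.
Qed.

End IteratedAveraging.

(** * The matrix exponential of a negated Laplacian *)

Lemma C_n_0 m : C m 0 = 1.
Proof.
  unfold C. rewrite Nat.sub_0_r. simpl (INR (Factorial.fact 0)). rewrite Rmult_1_l.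
  apply Rinv_r, INR_fact_neq_0.
Qed.

Lemma C_n_n m : C m m = 1.
Proof.
  unfold C. rewrite Nat.sub_diag. simpl (INR (Factorial.fact 0)). rewrite Rmult_1_r.
  apply Rinv_r, INR_fact_neq_0.
Qed.

(* Pascal's rule, in the shape of the inductive step of [mpow_binomial] *)
Lemma sum_binomial_step (s : nat -> R) (y : R) N :
  sum_f_R0 (fun k => C N k * y ^ k * s (S (N - k))) N + sum_f_R0 (fun k => C N k * y ^ S k * s (N - k)%nat) N
  = sum_f_R0 (fun k => C (S N) k * y ^ k * s (S N - k)%nat) (S N).
Proof.
  destruct N as [|m]; [simpl; rewrite !C_n_0, C_n_n; ring|].
  rewrite (decomp_sum (fun k => C (S m) k * y ^ k * s (S (S m - k))) (S m)) by lia.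
  rewrite (tech5 (fun k => C (S m) k * y ^ S k * s (S m - k)%nat) m).
  rewrite (decomp_sum (fun k => C (S (S m)) k * y ^ k * s (S (S m) - k)%nat) (S (S m))) by lia.
  simpl pred.
  rewrite (tech5 (fun i => C (S (S m)) (S i) * y ^ S i * s (S (S m) - S i)%nat) m).
  rewrite !C_n_0, !C_n_n.
  replace (sum_f_R0 (fun i => C (S (S m)) (S i) * y ^ S i * s (S (S m) - S i)%nat) m)
    with (sum_f_R0 (fun i => C (S m) (S i) * y ^ S i * s (S (S m - S i))) m
          + sum_f_R0 (fun i => C (S m) i * y ^ S i * s (S m - i)%nat) m).
  - replace (S (S m) - S (S m))%nat with 0%nat by lia. replace (S m - S m)%nat with 0%nat by lia.
    replace (S (S m - 0)) with (S (S m) - 0)%nat by lia. simpl (y ^ 0). ring.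
  - rewrite <- plus_sum. apply sum_eq. intros i Hi. rewrite <- (pascal (S m) i) by lia.
    replace (S (S m - S i)) with (S m - i)%nat by lia.
    replace (S (S m) - S i)%nat with (S m - i)%nat by lia. ring.
Qed.

Lemma sum_f_R0_ge_term f m : (forall k, 0 <= f k) -> f m <= sum_f_R0 f m.
Proof. intros H. destruct m; simpl; [lra|]. pose proof (cond_pos_sum f m H). lra. Qed.

Lemma exp_infinite_sum x : infinite_sum (fun k => / INR (Factorial.fact k) * x ^ k) (exp x).
Proof. unfold exp. destruct (exist_exp x) as [l Hl]. exact Hl. Qed.

Lemma mpow_rowsum_zero n M k : (forall i, (i < n)%nat -> rsum n (M i) = 0) ->
  forall i, (i < n)%nat -> rsum n (mpow n M k i) = match k with O => 1 | S _ => 0 end.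
Proof.
  intros HM. induction k as [|k IH]; intros i Hi; simpl mpow; unfold mmul.
  - rewrite (rsum_ext n (idm i) (fun j => idm i j * 1)) by (intros; ring). apply rsum_idm_l, Hi.
  - rewrite (rsum_swap n n (fun j l => M i l * mpow n M k l j)).
    rewrite (rsum_ext n _ (fun l => (match k with O => 1 | S _ => 0 end) * M i l)).
    + rewrite rsum_scal, HM by exact Hi. ring.
    + intros l Hl. rewrite rsum_scal, (IH l Hl). ring.
Qed.

Lemma expm_rowsum n M E : (forall i, (i < n)%nat -> rsum n (M i) = 0) -> is_expm n M E ->
  forall i, (i < n)%nat -> rsum n (E i) = 1.
Proof.
  intros HM HE i Hi.
  apply (UL_sequence
    (fun N => rsum n (fun j => rsum (S N) (fun k => mpow n M k i j / INR (Factorial.fact k))))).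
  - apply Un_cv_rsum. intros j Hj. apply HE; assumption.
  - apply (Un_cv_ext (fun _ => 1));
      [|intros e He; exists O; intros; unfold Rdist; rewrite Rminus_diag, Rabs_R0; lra].
    intros N. rewrite rsum_swap.
    rewrite (rsum_ext (S N) _ (fun k => (match k with O => 1 | S _ => 0 end) / INR (Factorial.fact k))).
    + induction N as [|N IHN]; simpl rsum in *; [simpl; field|]. rewrite <- IHN. unfold Rdiv. ring.
    + intros k _. rewrite <- (mpow_rowsum_zero n M k HM i Hi). unfold Rdiv.
      rewrite Rmult_comm, <- rsum_scal. apply rsum_ext. intros. ring.
Qed.

Definition shift_mat (a : R) (M : Mat) : Mat := fun i j => M i j + a * idm i j.

Lemma mpow_binomial n M a N i j : (i < n)%nat ->
  mpow n M N i j = sum_f_R0 (fun k => C N k * (- a) ^ k * mpow n (shift_mat a M) (N - k) i j) N.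
Proof.
  revert i. induction N as [|N IH]; intros i Hi.
  - simpl. rewrite C_n_0. ring.
  - set (Q := shift_mat a M).
    set (X := fun l => sum_f_R0 (fun k => C N k * (- a) ^ k * mpow n Q (N - k) l j) N).
    simpl mpow at 1. unfold mmul.
    rewrite (rsum_ext n _ (fun l => Q i l * X l - a * (idm i l * X l))).
    2:{ intros l Hl. rewrite IH by exact Hl. change (Q i l) with (M i l + a * idm i l). unfold X, Q. ring. }
    rewrite rsum_minus, rsum_scal, rsum_idm_l by exact Hi.
    rewrite (rsum_ext n _
      (fun l => sum_f_R0 (fun k => C N k * (- a) ^ k * (Q i l * mpow n Q (N - k) l j)) N)).
    2:{ intros l Hl. unfold X. rewrite scal_sum. apply sum_eq. intros. ring. }
    rewrite rsum_sum_f_R0, <- (sum_binomial_step (fun m => mpow n Q m i j) (- a) N).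
    assert (H1 : sum_f_R0 (fun k => rsum n (fun l => C N k * (- a) ^ k * (Q i l * mpow n Q (N - k) l j))) N
      = sum_f_R0 (fun k => C N k * (- a) ^ k * mpow n Q (S (N - k)) i j) N)
      by (apply sum_eq; intros k _; apply rsum_scal).
    assert (H2 : sum_f_R0 (fun k => C N k * (- a) ^ S k * mpow n Q (N - k) i j) N = - a * X i)
      by (unfold X; rewrite scal_sum; apply sum_eq; intros k _; simpl pow; ring).
    rewrite H1, H2. ring.
Qed.

Lemma mpow_div_fact_cauchy n M a N i j : (i < n)%nat ->
  mpow n M N i j / INR (Factorial.fact N) =
  sum_f_R0 (fun k => / INR (Factorial.fact k) * (- a) ^ k *
    (mpow n (shift_mat a M) (N - k) i j / INR (Factorial.fact (N - k)))) N.
Proof.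
  intros Hi. rewrite (mpow_binomial n M a N i j Hi). unfold Rdiv. rewrite Rmult_comm, scal_sum.
  apply sum_eq. intros k Hk. unfold C.
  pose proof (INR_fact_neq_0 N). pose proof (INR_fact_neq_0 k). pose proof (INR_fact_neq_0 (N - k)).
  field; auto.
Qed.

Section ExpmShift.
Variables (n : nat) (M : Mat) (a K : R).
Hypothesis shift_bounds :
  forall i j, (i < n)%nat -> (j < n)%nat -> 0 <= shift_mat a M i j <= K.

Lemma mpow_shift_bounds m i j : (i < n)%nat -> (j < n)%nat ->
  0 <= mpow n (shift_mat a M) m i j <= (INR n * K) ^ m.
Proof.
  revert i j. induction m as [|m IH]; intros i j Hi Hj; simpl mpow.
  - unfold idm. simpl. destruct (Nat.eqb i j); lra.
  - unfold mmul. split.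
    + apply rsum_nonneg. intros l Hl. apply Rmult_le_pos; [apply shift_bounds|apply IH]; auto.
    + apply Rle_trans with (rsum n (fun _ => K * (INR n * K) ^ m)).
      * apply rsum_le. intros l Hl.
        apply Rmult_le_compat; try apply shift_bounds; try apply IH; auto.
      * rewrite rsum_const. simpl. lra.
Qed.

(* [exp M = exp (-a) * exp (shift_mat a M)], and the second factor has nonnegative terms *)
Lemma expm_shift_ge E : is_expm n M E -> forall m i j, (i < n)%nat -> (j < n)%nat ->
  exp (- a) * (mpow n (shift_mat a M) m i j / INR (Factorial.fact m)) <= E i j.
Proof.
  intros HE m i j Hi Hj.
  set (Y := fun m => mpow n (shift_mat a M) m i j / INR (Factorial.fact m)).
  assert (HY : forall m, 0 <= Y m).
  { intros k. apply Rmult_le_pos; [apply mpow_shift_bounds; auto|].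
    left. apply Rinv_0_lt_compat, INR_fact_lt_0. }
  destruct (Rseries_CV_comp Y (fun m => / INR (Factorial.fact m) * (INR n * K) ^ m)) as [Sy HSy].
  { intros k. split; [apply HY|]. unfold Y, Rdiv. rewrite Rmult_comm.
    apply Rmult_le_compat_l; [left; apply Rinv_0_lt_compat, INR_fact_lt_0|apply mpow_shift_bounds; auto]. }
  { exists (exp (INR n * K)). apply exp_infinite_sum. }
  assert (Hprod : infinite_sum
    (fun N => sum_f_R0 (fun k => / INR (Factorial.fact k) * (- a) ^ k * Y (N - k)%nat) N) (exp (- a) * Sy)).
  { apply Series.is_series_Reals, Series.is_series_mult.
    - apply Series.is_series_Reals, exp_infinite_sum.
    - apply Series.is_series_Reals, HSy.
    - exists (exp (Rabs a)). apply Series.is_series_Reals.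
      apply (Un_cv_ext (sum_f_R0 (fun k => / INR (Factorial.fact k) * Rabs a ^ k)));
        [|apply exp_infinite_sum].
      intros N. apply sum_eq. intros k _. rewrite Rabs_mult, <- RPow_abs, Rabs_Ropp.
      rewrite (Rabs_pos_eq (/ _)); [reflexivity|left; apply Rinv_0_lt_compat, INR_fact_lt_0].
    - exists Sy. apply Series.is_series_Reals.
      apply (Un_cv_ext (sum_f_R0 Y)); [|exact HSy].
      intros N. apply sum_eq. intros k _. rewrite Rabs_pos_eq; [reflexivity|apply HY]. }
  assert (HES : E i j = exp (- a) * Sy).
  { apply (UL_sequence (fun N => rsum (S N) (fun k => mpow n M k i j / INR (Factorial.fact k)))).
    - apply HE; assumption.
    - apply (Un_cv_ext _ _ (fun N => eq_sym (rsum_S_sum_f_R0 N _))).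
      apply (Un_cv_ext _ _ (fun N => sum_eq _ _ N (fun k _ => eq_sym (mpow_div_fact_cauchy n M a k i j Hi)))).
      exact Hprod. }
  rewrite HES. apply Rmult_le_compat_l; [left; apply exp_pos|].
  eapply Rle_trans; [apply (sum_f_R0_ge_term Y m HY)|apply sum_incr; [exact HSy|exact HY]].
Qed.

End ExpmShift.

Section LaplacianExp.
Variables (n : nat) (B : Mat) (dm t : R).
Hypothesis n_pos : (0 < n)%nat.
Hypothesis B_nonneg : forall i j, (i < n)%nat -> (j < n)%nat -> 0 <= B i j.
Hypothesis B_diag : forall i, (i < n)%nat -> B i i = 0.
Hypothesis B_deg : forall i, (i < n)%nat -> rsum n (B i) <= dm.
Hypothesis t_pos : 0 < t.

(* shifting [- t L] by [t (dm + 1)] makes it entrywise nonnegative with a positive diagonal *)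
Let Q : Mat := shift_mat (t * (dm + 1)) (mscale (- t) (lap n B)).

Lemma deg_nonneg i : (i < n)%nat -> 0 <= rsum n (B i).
Proof. intros Hi. apply rsum_nonneg. intros. apply B_nonneg; assumption. Qed.

Lemma shift_lap_diag i : (i < n)%nat -> t <= Q i i <= t * (dm + 1).
Proof.
  intros Hi. unfold Q, shift_mat, mscale, idm. rewrite Nat.eqb_refl, lap_diag, B_diag by exact Hi.
  pose proof (B_deg i Hi). pose proof (deg_nonneg i Hi). split; nra.
Qed.

Lemma shift_lap_off i j : i <> j -> Q i j = t * B i j.
Proof.
  intros Hij. unfold Q, shift_mat, mscale, idm. rewrite lap_off by exact Hij.
  destruct (Nat.eqb_spec i j); [lia|ring].
Qed.

Lemma shift_lap_bounds i j : (i < n)%nat -> (j < n)%nat -> 0 <= Q i j <= t * (dm + 1).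
Proof.
  intros Hi Hj. destruct (Nat.eq_dec i j) as [<-|Hij].
  - pose proof (shift_lap_diag i Hi). lra.
  - rewrite shift_lap_off by exact Hij.
    pose proof (rsum_ge_term n (B i) j (fun k Hk => B_nonneg i k Hi Hk) Hj). pose proof (B_nonneg i j Hi Hj).
    pose proof (B_deg i Hi). split; nra.
Qed.

Lemma mpow_shift_lap_within T i : within n B T i -> 0 < mpow n Q T i O.
Proof.
  assert (Hterm : forall T i k, (i < n)%nat -> (k < n)%nat -> 0 < Q i k -> 0 < mpow n Q T k O ->
    0 < mpow n Q (S T) i O).
  { intros T' i' k Hi Hk HQ HP. simpl mpow. unfold mmul.
    eapply Rlt_le_trans; [|apply (rsum_ge_term n (fun l => Q i' l * mpow n Q T' l O) k); auto].
    - apply Rmult_lt_0_compat; assumption.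
    - intros l Hl. apply Rmult_le_pos; [apply shift_lap_bounds; auto|].
      apply (mpow_shift_bounds n _ _ (t * (dm + 1)) shift_lap_bounds); auto. }
  induction 1 as [|T i Hw IH|T i k Hw IH Hk Hi HB].
  - simpl. unfold idm. simpl. lra.
  - assert (Hi : (i < n)%nat) by (apply (within_lt n B T); auto).
    apply (Hterm T i i); auto. pose proof (shift_lap_diag i Hi). lra.
  - apply (Hterm T i k); auto. rewrite shift_lap_off.
    + apply Rmult_lt_0_compat; assumption.
    + intros ->. rewrite B_diag in HB by exact Hi. lra.
Qed.

Variable E : Mat.
Hypothesis E_expm : is_expm n (mscale (- t) (lap n B)) E.

Lemma expm_lap_ge m i j : (i < n)%nat -> (j < n)%nat ->
  exp (- (t * (dm + 1))) * (mpow n Q m i j / INR (Factorial.fact m)) <= E i j.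
Proof. exact (expm_shift_ge n _ (t * (dm + 1)) (t * (dm + 1)) shift_lap_bounds E E_expm m i j). Qed.

Lemma expm_lap_stochastic : row_stochastic n E.
Proof.
  split.
  - intros i j Hi Hj. eapply Rle_trans; [|apply (expm_lap_ge 0 i j Hi Hj)].
    apply Rmult_le_pos; [left; apply exp_pos|]. simpl. unfold idm. destruct (Nat.eqb i j); lra.
  - apply (expm_rowsum n (mscale (- t) (lap n B))); [|exact E_expm]. intros i Hi. unfold mscale.
    rewrite rsum_scal, lap_rowsum by exact Hi. ring.
Qed.

Lemma expm_lap_within_pos T i : within n B T i -> 0 < E i O.
Proof.
  intros Hw. assert (Hi : (i < n)%nat) by (apply (within_lt n B T); auto).
  eapply Rlt_le_trans; [|apply (expm_lap_ge T i O Hi n_pos)].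
  apply Rmult_lt_0_compat; [apply exp_pos|].
  apply Rdiv_lt_0_compat; [apply mpow_shift_lap_within, Hw|apply INR_fact_lt_0].
Qed.

End LaplacianExp.

Lemma fin_min_pos n (f : nat -> R) : (forall i, (i < n)%nat -> 0 < f i) ->
  exists d, 0 < d /\ forall i, (i < n)%nat -> d <= f i.
Proof.
  induction n as [|n IH]; intros H; [exists 1; split; [lra|intros; lia]|].
  destruct IH as [d [Hd Hf]]; [intros; apply H; lia|].
  exists (Rmin d (f n)). split; [apply Rmin_glb_lt; auto|].
  intros i Hi. destruct (Nat.eq_dec i n) as [->|Hin]; [apply Rmin_r|].
  eapply Rle_trans; [apply Rmin_l|apply Hf; lia].
Qed.

Lemma Amode_cases sc A s i j : Amode sc A s i j = 0 \/ Amode sc A s i j = A i j.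
Proof.
  unfold Amode. destruct sc, s; cbv zeta;
    repeat match goal with |- context [if ?b then _ else _] => destruct b end; auto.
Qed.

Lemma Lmode_m4 n sc A : Lmode n sc A m4 = lap n A.
Proof. reflexivity. Qed.

Section Network.
Variables (n : nat) (sc : scenario) (A : Mat).
Hypothesis n_pos : (0 < n)%nat.
Hypothesis A_graph : simple_connected_graph n A.

Lemma A_nonneg i j : (i < n)%nat -> (j < n)%nat -> 0 <= A i j.
Proof. intros Hi Hj. destruct A_graph as [H01 _]. destruct (H01 i j Hi Hj) as [-> | ->]; lra. Qed.

Lemma Amode_nonneg s i j : (i < n)%nat -> (j < n)%nat -> 0 <= Amode sc A s i j.
Proof. intros Hi Hj. destruct (Amode_cases sc A s i j) as [-> | ->]; [lra|apply A_nonneg; auto]. Qed.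

Lemma Amode_diag s i : (i < n)%nat -> Amode sc A s i i = 0.
Proof.
  intros Hi. destruct A_graph as [_ [_ [Hdiag _]]].
  destruct (Amode_cases sc A s i i) as [-> | ->]; auto.
Qed.

Lemma Amode_deg s i : (i < n)%nat -> rsum n (Amode sc A s i) <= dmax n A.
Proof.
  intros Hi. apply Rle_trans with (deg n A i); [|apply vmax_ge, Hi].
  apply rsum_le. intros j Hj. destruct (Amode_cases sc A s i j) as [-> | ->]; [apply A_nonneg|]; auto. lra.
Qed.

Lemma A_deg i : (i < n)%nat -> rsum n (A i) <= dmax n A.
Proof. exact (vmax_ge n (deg n A) i). Qed.

Lemma dmax_nonneg : 0 <= dmax n A.
Proof. eapply Rle_trans; [apply rsum_nonneg|apply (A_deg O n_pos)]. intros. apply A_nonneg; auto. Qed.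

Lemma A_within_all : exists T, forall i, (i < n)%nat -> within n A T i.
Proof. destruct A_graph as [_ [Hsym [_ Hc]]]. apply within_all; assumption. Qed.

Variable p : mode -> R.
Hypothesis p_nonneg : forall s, 0 <= p s.
Hypothesis p_sum : p m1 + p m2 + p m3 + p m4 = 1.
Hypothesis p_m4 : 0 < p m4.

Lemma euler_consensus h kbar : 0 < h -> h * dmax n A < 1 -> (1 <= kbar)%nat ->
  forall x0 eps, 0 < eps ->
  Un_cv (prob_spread_ge n p (fun s => euler_block n h kbar (Lmode n sc A s)) x0 eps) 0.
Proof.
  intros Hh Hhd Hkbar. set (g := Rmin (1 - h * dmax n A) h).
  assert (Hg : 0 < g) by (apply Rmin_glb_lt; lra).
  destruct A_within_all as [T HT].
  apply (consensus_in_probability n p _ p_nonneg p_sum n_pos) with m4 T (1 - g ^ (T * kbar)).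
  - intros s x. unfold euler_block. apply spread_iter_le. intros y.
    apply (spread_avg_le n _
      (euler_matrix_stochastic n _ _ h (Amode_nonneg s) (Amode_diag s) (Amode_deg s) Hh Hhd));
      [exact n_pos|]. intros. apply euler_step_matvec. assumption.
  - exact p_m4.
  - assert (Hg1 : g <= 1) by (pose proof dmax_nonneg; eapply Rle_trans; [apply Rmin_l|nra]).
    assert (0 < g ^ (T * kbar) <= 1)
      by (split; [apply pow_lt, Hg|rewrite <- (pow1 (T * kbar)); apply pow_incr; lra]).
    lra.
  - intros x. rewrite Lmode_m4. unfold euler_block. rewrite iter_iter.
    destruct A_graph as [H01 [_ [Hdiag _]]].
    apply (spread_iter_avg_contract n A (euler_matrix h (lap n A))); try lra.
    + exact n_pos.
    + apply (euler_matrix_stochastic n A (dmax n A) h); auto using A_nonneg, A_deg.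
    + intros. apply euler_step_matvec. assumption.
    + intros i Hi. eapply Rle_trans; [apply Rmin_l|].
      apply (euler_matrix_diag n A (dmax n A) h); auto using A_deg.
    + intros i k Hi Hk HA. assert (Hik : i <> k) by (intros ->; rewrite Hdiag in HA by assumption; lra).
      rewrite (euler_matrix_off n A h i k Hik).
      destruct (H01 i k Hi Hk) as [E | ->]; [lra|]. rewrite Rmult_1_r. apply Rmin_r.
    + intros i Hi. apply (within_le n A T); [|apply HT, Hi]. nia.
Qed.

Lemma expm_consensus (E : mode -> Mat) t : 0 < t ->
  (forall s, is_expm n (mscale (- t) (Lmode n sc A s)) (E s)) ->
  forall x0 eps, 0 < eps -> Un_cv (prob_spread_ge n p (fun s x => matvec n (E s) x) x0 eps) 0.
Proof.
  intros Ht HE.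
  assert (HEs : forall s, row_stochastic n (E s))
    by (intros s; apply (expm_lap_stochastic n (Amode sc A s) (dmax n A) t);
        auto using Amode_nonneg, Amode_diag, Amode_deg; apply HE).
  destruct A_within_all as [T HT].
  destruct (fin_min_pos n (fun i => E m4 i O)) as [d [Hd Hdi]].
  { intros i Hi. destruct A_graph as [_ [_ [Hdiag _]]].
    exact (expm_lap_within_pos n A (dmax n A) t n_pos A_nonneg Hdiag
      A_deg Ht (E m4) (HE m4) T i (HT i Hi)). }
  assert (Hd1 : d <= 1).
  { destruct (HEs m4) as [Hpos Hsum]. rewrite <- (Hsum O n_pos).
    eapply Rle_trans; [apply (Hdi O n_pos)|]. apply rsum_ge_term; auto. }
  apply (consensus_in_probability n p _ p_nonneg p_sum n_pos) with m4 1%nat (1 - d).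
  - intros s x. apply (spread_avg_le n (E s) (HEs s)); auto.
  - exact p_m4.
  - lra.
  - intros x. apply (spread_matvec_contract n (E m4) (HEs m4) x O d); auto; lra.
Qed.

End Network.

Lemma mul_lt_1_of_lt_inv h d : 0 <= d -> h < 1 / d -> h * d < 1.
Proof.
  intros Hd Hh. destruct (Req_dec d 0) as [->|Hd0]; [lra|].
  apply (Rmult_lt_compat_r d) in Hh; [|lra]. unfold Rdiv in Hh.
  rewrite Rmult_1_l, Rinv_l in Hh by exact Hd0. exact Hh.
Qed.

Theorem theorem2 :
  forall (n : nat) (sc : scenario) (A : Mat) (al be ga th h : R) (kbar : nat),
    (3 <= n)%nat ->
    simple_connected_graph n A ->
    0 < al -> 0 < be -> 0 < ga -> 0 < th -> al + be + ga + th = 1 ->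
    (1 <= kbar)%nat ->
    0 < h -> h < 1 / dmax n A ->
    strongly_connected n (expected_graph sc A al be ga th) ->
    (forall (x0 : Vec) (eps : R), 0 < eps ->
       Un_cv (prob_spread_ge n (prob al be ga th)
                (fun s => euler_block n h kbar (Lmode n sc A s)) x0 eps) 0)
    /\
    (forall E : mode -> Mat,
       (forall s, is_expm n (mscale (- (INR kbar * h)) (Lmode n sc A s)) (E s)) ->
       forall (x0 : Vec) (eps : R), 0 < eps ->
         Un_cv (prob_spread_ge n (prob al be ga th)
                  (fun s x => matvec n (E s) x) x0 eps) 0).
Proof.
  intros n sc A al be ga th h kbar Hn HA Hal Hbe Hga Hth Hsum Hkbar Hh Hhd _.
  assert (Hn0 : (0 < n)%nat) by lia.
  assert (Hp : forall s, 0 <= prob al be ga th s) by (destruct s; simpl; lra).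
  assert (Hp4 : 0 < prob al be ga th m4) by exact Hth.
  split.
  - apply (euler_consensus n sc A Hn0 HA); auto.
    apply mul_lt_1_of_lt_inv; [apply (dmax_nonneg n A Hn0 HA)|exact Hhd].
  - intros E HE. apply (expm_consensus n sc A Hn0 HA) with (INR kbar * h); auto.
    apply Rmult_lt_0_compat; [apply lt_0_INR; lia|exact Hh].
Qed.
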